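(* Let $n\ge 2$, $T=\{1,\dots,n\}$, $\mathcal T$ a topology on $T$, and fix $k\ge 1$ such that the set $I=\{1,\dots,n-1\}\setminus X_{k-1}$ of indices of new quotient spaces is nonempty. Suppose all $N_i$, $i\in I$, are equal to a common value $s$ (Case 1: $\mu_1\ne 0$, $\mu_2=\mu_3=0$). Then the new $k$-systems of $\mathcal T$ form one of the following configurations, where each $A_j$ denotes a (possibly empty) set of old points and each $R_j$ a nonempty set of new points: (1a) the new $k$-systems are exactly $s+1$ upper non-paired $k$-systems $A_1\cup R_1,\dots,A_{s+1}\cup R_{s+1}$, each new point lies in exactly one of the sets $R_j$, and $\mu_1$ equals the total number of new points; (1b) the new $k$-systems are exactly $s$ pairs $A_j\cup R_j$, $A_j\cup R_j\cup\{n\}$ ($j=1,\dots,s$); (1c) there are no new $k$-systems (and $s=0$); (1d) the new $k$-systems are exactly lower $k$-systems $A_1\cup R_1\cup\{n\},\dots,A_x\cup R_x\cup\{n\}$ (non-paired), and each new point lies in exactly one of the sets $R_j$.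
   Context: For $\alpha\in T$, $\alpha^{*}$ denotes the smallest open set of $\mathcal T$ containing $\alpha$. For $m\ge 0$, an $m$-system is an open set $P$ with $|P\setminus\{n\}|=m$; upper if $n\notin P$, lower if $n\in P$. Two $k$-systems $P$ and $P\cup\{n\}$ ($n\notin P$) that are both open are called paired; a $k$-system not part of such a pair is non-paired. At stage $k$, a point $\alpha\neq n$ is old if $\alpha^{*}$ is an $m$-system for some $m<k$, and new if $\alpha^{*}$ is a $k$-system; $X_{k-1}$ is the set of old points. A $k$-system is new if it contains a point $p\neq n$ not contained in any $m$-system with $m\le k-1$. For $i\in\{1,\dots,n-1\}$, $Q^{i}$ is the quotient space obtained by identifying $i$ and $n$ (natural map $f_i$ onto $T(i,n)=\{\{z\}:z\notin\{i,n\}\}\cup\{\{i,n\}\}$; $V$ open iff $f_i^{-1}(V)\in\mathcal T$). $Q^{i}$ is a new quotient space if $i\notin X_{k-1}$. A new open $k$-set of $Q^{i}$ is an open $V$ of $Q^{i}$ with $|V|=k$ such that $f_i^{-1}(V)$ is a new $k$-system; $N_i$ is their number. With $s=\min_{i\in I}N_i$, $\mu_1,\mu_2,\mu_3$ denote the numbers of $i\in I$ with $N_i=s$, $s+1$, $s+2$ respectively (by a theorem of the paper, $N_i\in\{s,s+1,s+2\}$ always). *)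

From mathcomp Require Import all_boot.
Set Implicit Arguments. Unset Strict Implicit. Unset Printing Implicit Defensive.

Section Topo.
Variables (T : finType) (nn : T) (tau : {set {set T}}).

(* a topology on the finite set T (finite unions/intersections suffice) *)
Definition is_topology : Prop :=
  [/\ set0 \in tau, setT \in tau,
      (forall U V, U \in tau -> V \in tau -> U :|: V \in tau) &
      (forall U V, U \in tau -> V \in tau -> U :&: V \in tau)].

Definition star (a : T) : {set T} := \bigcap_(U in tau | a \in U) U.

Definition msystem (m : nat) (P : {set T}) : bool :=
  (P \in tau) && (#|P :\ nn| == m).
Definition upper (P : {set T}) : bool := nn \notin P.
Definition lower (P : {set T}) : bool := nn \in P.

(* P belongs to a pair  Q, Q ∪ {n}  of open sets (n ∉ Q) *)
Definition paired (P : {set T}) : bool :=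
  (P \in tau) &&
  (if nn \in P then P :\ nn \in tau else nn |: P \in tau).
Definition nonpaired (k : nat) (P : {set T}) : bool :=
  msystem k P && ~~ paired P.

Definition old_pts (k : nat) : {set T} :=
  [set a | (a != nn) && [exists m : 'I_k, msystem m (star a)]].
Definition new_pts (k : nat) : {set T} :=
  [set a | (a != nn) && msystem k (star a)].

Definition new_ksys (k : nat) (P : {set T}) : bool :=
  msystem k P &&
  [exists p in P, (p != nn) &&
     [forall Q in tau, (p \in Q) ==> ~~ [exists m : 'I_k, msystem m Q]]].
Definition new_ksystems (k : nat) : {set {set T}} := [set P | new_ksys k P].

(* quotient Q^i identifying i and n: the class {i,n} is represented by n *)
Definition fq (i : T) (x : T) : T := if x == i then nn else x.
Definition quot_open (i : T) (V : {set T}) : bool :=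
  (V \subset fq i @: setT) && (fq i @^-1: V \in tau).
Definition Nq (k : nat) (i : T) : nat :=
  #|[set V | quot_open i V && (#|V| == k) && new_ksys k (fq i @^-1: V)]|.

Definition Iset (k : nat) : {set T} :=
  [set i | (i != nn) && (i \notin old_pts k)].

End Topo.

Lemma lastpt_proof (n : nat) : 2 <= n -> n.-1 < n.
Proof. by case: n. Qed.
(* the point n of T = {1,...,n}, where point j is encoded by j-1 : 'I_n *)
Definition lastpt (n : nat) (h : 2 <= n) : 'I_n := Ordinal (lastpt_proof h).

From mathcomp Require Import all_boot zify.
Set Implicit Arguments. Unset Strict Implicit. Unset Printing Implicit Defensive.

(* A new k-system P contains a new point p, and then P \ {n} = p^* \ {n}: the
   new k-systems through p are p^* and, if it is open, p^* ∪ {n}.  Counting in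
   Q^p the new k-systems that contain both or neither of p and n gives
     N_p + [n ∉ p^*] = u + [p^* ∪ {n} is open],
   u the number of upper new k-systems, whereas N_i = u for every other index i
   of a new quotient space.  Hence if all N_i are equal, all new points p are of
   one kind: n ∉ p^* and p^* ∪ {n} not open (N = u - 1, configuration (1a)),
   n ∉ p^* and p^* ∪ {n} open (N = u, (1b)), or n ∈ p^* (N = u + 1, (1d)). *)

Section FinsetFacts.
Variable aT : finType.
Implicit Types (a : aT) (A B X : {set aT}).

Lemma setD1_notin a A : a \notin A -> A :\ a = A.
Proof. by move=> aA; apply/setDidPl; rewrite disjoint_sym disjoints1. Qed.

Lemma setU1_in a A : a \in A -> a |: A = A.
Proof. by move=> aA; apply/setUidPr; rewrite sub1set. Qed.

Lemma eq_setD1E a A B : (A :\ a == B :\ a) = (A == B :\ a) || (A == a |: B).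
Proof.
apply/idP/orP => [/eqP/setP AB | AB]; last first.
  by case: AB => /eqP->; apply/eqP/setP => x; rewrite !inE; case: eqP.
case aA: (a \in A); [right|left]; apply/eqP/setP => x; have := AB x; rewrite !inE;
  by case: (eqVneq x a) => [->|]; rewrite ?aA.
Qed.

Lemma card_set1_sep a (Q : pred aT) : #|[set x in [set a] | Q x]| = Q a.
Proof.
case Qa: (Q a); [rewrite /= -(cards1 a) | rewrite /= -(cards0 aT)]; apply: eq_card => x;
  by rewrite !inE; case: eqVneq => [->|]; rewrite ?Qa ?andbF.
Qed.

Lemma enum_setP X m : #|X| = m ->
  exists2 f : 'I_m -> aT, injective f & [set f j | j in 'I_m] = X.
Proof.
move=> <-; exists enum_val; first exact: enum_val_inj.
apply/setP => x; apply/imsetP/idP => [[j _ ->]|Xx]; first exact: enum_valP.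
by exists (enum_rank_in Xx x); rewrite ?enum_rankK_in.
Qed.

End FinsetFacts.

Section Quotient.
Variables (T : finType) (nn : T) (tau : {set {set T}}) (k : nat) (i : T).
Hypothesis i_nn : i != nn.
Local Notation f := (fq nn i).

Lemma fq_id x : x != i -> f x = x.
Proof. by rewrite /fq => /negbTE ->. Qed.

Lemma fq_range (V : {set T}) : (V \subset f @: setT) = (i \notin V).
Proof.
apply/subsetP/idP => [Vf | iV x xV].
  apply/negP => /Vf /imsetP[x _]; case: (eqVneq x i) => [->|xi].
    by rewrite /fq eqxx => /eqP; rewrite (negbTE i_nn).
  by rewrite fq_id // => iE; rewrite iE eqxx in xi.
have xi : x != i by apply: contraNneq iV => <-.
by apply/imsetP; exists x; rewrite ?fq_id.
Qed.

Lemma card_setD1_swap (P : {set T}) : (i \in P) = (nn \in P) -> #|P :\ i| = #|P :\ nn|.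
Proof. by move=> iP; have := cardsD1 i P; rewrite (cardsD1 nn P) iP => /addnI. Qed.

(* Open sets of Q^i are the images of the open sets of T containing both or
   neither of i and n. *)
Lemma NqE :
  Nq nn tau k i = #|[set P in new_ksystems nn tau k | (i \in P) == (nn \in P)]|.
Proof.
have fi : f i = nn by rewrite /fq eqxx.
have fnn : f nn = nn by rewrite fq_id // eq_sym.
rewrite /Nq -(card_in_imset (f := fun V : {set T} => f @^-1: V)); last first.
  move=> V1 V2; rewrite !inE /quot_open !fq_range.
  move=> /andP[/andP[/andP[iV1 _] _] _] /andP[/andP[/andP[iV2 _] _] _] /setP E.
  apply/setP => x; case: (eqVneq x i) => [->|xi]; first by rewrite (negbTE iV1) (negbTE iV2).
  by have := E x; rewrite !inE fq_id.
apply: eq_card => P; apply/imsetP/idP => [[V]|].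
  by rewrite !inE => /andP[_ NK] ->; rewrite NK !inE fi fnn eqxx.
rewrite !inE => /andP[NK /eqP iP].
have PE : f @^-1: (P :\ i) = P.
  apply/setP => x; rewrite !inE; case: (eqVneq x i) => [->|xi]; last by rewrite fq_id // xi.
  by rewrite fi iP eq_sym i_nn.
exists (P :\ i) => //.
rewrite !inE /quot_open fq_range !inE eqxx /= PE NK andbT card_setD1_swap //.
by case/andP: NK => /andP[-> ->].
Qed.

End Quotient.

Section Stage.
Variables (T : finType) (nn : T) (tau : {set {set T}}) (k : nat).
Hypothesis top : is_topology tau.

Local Notation star := (star tau).
Local Notation Old := (old_pts nn tau k).
Local Notation New := (new_pts nn tau k).
Local Notation NS := (new_ksystems nn tau k).
Implicit Types (a p : T) (P Q U : {set T}).

Lemma star_open a : star a \in tau.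
Proof.
have [tau0 tauT _ tauI] := top.
by apply: (big_ind (fun U : {set T} => U \in tau)) => // U /andP[].
Qed.

Lemma mem_star a : a \in star a.
Proof. by apply/bigcapP => U /andP[]. Qed.

Lemma star_min a U : U \in tau -> a \in U -> star a \subset U.
Proof. by move=> tauU aU; apply: bigcap_inf; rewrite tauU aU. Qed.

Lemma open_star_setD1 p : p != nn -> (star p :\ nn \in tau) = (nn \notin star p).
Proof.
move=> p_nn; case: (boolP (nn \in star p)) => nS; last by rewrite setD1_notin ?star_open.
have pD : p \in star p :\ nn by rewrite !inE p_nn mem_star.
by apply/negP => /star_min /(_ pD) /subsetP /(_ nn nS); rewrite !inE eqxx.
Qed.

Lemma card_star_le P p : P \in tau -> p \in P -> #|star p :\ nn| <= #|P :\ nn|.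
Proof. by move=> tauP pP; apply/subset_leq_card/setSD/star_min. Qed.

Lemma old_ptsP a : reflect (a != nn /\ #|star a :\ nn| < k) (a \in Old).
Proof.
rewrite inE; apply: (iffP andP) => [[a_nn /existsP[m /andP[_ /eqP ->]]]|[a_nn lt_k]].
  by split => //; rewrite ltn_ord.
by split => //; apply/existsP; exists (Ordinal lt_k); rewrite /msystem star_open eqxx.
Qed.

Lemma new_ptsP a : reflect (a != nn /\ #|star a :\ nn| = k) (a \in New).
Proof. by rewrite inE /msystem star_open; apply: (iffP andP) => -[? /eqP]. Qed.

Lemma new_pts_notin_old p : p \in New -> p \notin Old.
Proof. by case/new_ptsP => _ pk; apply/negP => /old_ptsP[_]; rewrite pk ltnn. Qed.

Lemma msystem_old_or_new P p :
  msystem nn tau k P -> p \in P -> p != nn -> (p \in Old) || (p \in New).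
Proof.
case/andP => tauP /eqP Pk pP p_nn; have := card_star_le tauP pP.
by rewrite Pk leq_eqVlt => /orP[/eqP|] ?; apply/orP; [right; apply/new_ptsP | left; apply/old_ptsP].
Qed.

Lemma new_ksysP P : (P \in NS) = msystem nn tau k P && [exists p in P, p \in New].
Proof.
rewrite inE /new_ksys; case msP: (msystem _ _ _ _) => //=.
apply/existsP/existsP => -[p] => [/and3P[pP p_nn /forallP notold] | /andP[pP pN]]; exists p.
  rewrite pP; have /orP[/old_ptsP[_ lt_k]|//] := msystem_old_or_new msP pP p_nn.
    have := notold (star p); rewrite star_open mem_star /= => /existsP; case.
    by exists (Ordinal lt_k); rewrite /msystem star_open eqxx.
have [p_nn pk] := new_ptsP _ pN.
rewrite pP p_nn; apply/forallP => Q; apply/implyP => tauQ; apply/implyP => pQ.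
apply/existsP => -[m /andP[_ /eqP Qm]].
by have := card_star_le tauQ pQ; rewrite pk Qm leqNgt ltn_ord.
Qed.

Lemma new_ksys_msystem P : P \in NS -> msystem nn tau k P.
Proof. by rewrite new_ksysP => /andP[]. Qed.

Lemma new_ksys_new_pt P : P \in NS -> exists2 p, p \in New & p \in P.
Proof. by rewrite new_ksysP => /andP[_ /existsP[p /andP[pP pN]]]; exists p. Qed.

Lemma mem_new_ksys_through p P : p \in New ->
  (P \in NS) && (p \in P) = (P \in tau) && ((P == star p) || (P == nn |: star p)).
Proof.
move=> pN; have [p_nn pk] := new_ptsP _ pN.
apply/idP/idP => [/andP[NSP pP] | /andP[tauP PE]].
  have /andP[tauP /eqP Pk] := new_ksys_msystem NSP.
  have : P :\ nn == star p :\ nn by rewrite eq_sym eqEcard setSD ?star_min //= Pk pk.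
  rewrite tauP eq_setD1E => /orP[/eqP PE|->]; last by rewrite orbT.
  by move: tauP; rewrite PE open_star_setD1 // => /setD1_notin ->; rewrite eqxx.
have pP : p \in P by case/orP: PE => /eqP->; rewrite ?inE mem_star ?orbT.
rewrite new_ksysP /msystem tauP pP andbT /=.
have -> : P :\ nn = star p :\ nn.
  by case/orP: PE => /eqP-> //; apply/setP => x; rewrite !inE; case: eqP.
rewrite pk eqxx /=.
by apply/existsP; exists p; rewrite pP pN.
Qed.

Definition new_side (b : bool) : {set {set T}} := [set P in NS | (nn \in P) == b].

Lemma in_new_side b P : (P \in new_side b) = (P \in NS) && ((nn \in P) == b).
Proof. by rewrite [LHS]inE. Qed.

Lemma new_side_open b P : P \in new_side b -> P \in tau.
Proof. by rewrite in_new_side => /andP[/new_ksys_msystem/andP[]]. Qed.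

Lemma new_ksys_sides : NS = new_side false :|: new_side true.
Proof. by apply/setP => P; rewrite !inE; case: (nn \in P); rewrite /= ?andbT ?andbF ?orbF. Qed.

Lemma new_upper_star P : P \in new_side false -> exists2 p, p \in New & P = star p.
Proof.
rewrite inE eqbF_neg => /andP[NSP nP]; have [p pN pP] := new_ksys_new_pt NSP.
exists p => //; move: (mem_new_ksys_through P pN); rewrite NSP pP.
by case/esym/andP => _ /orP[/eqP //|/eqP PE]; rewrite PE setU11 in nP.
Qed.

Lemma new_lower_star P : P \in new_side true -> exists2 p, p \in New & P = nn |: star p.
Proof.
rewrite inE eqb_id => /andP[NSP nP]; have [p pN pP] := new_ksys_new_pt NSP.
exists p => //; move: (mem_new_ksys_through P pN); rewrite NSP pP.
by case/esym/andP => _ /orP[/eqP PE|/eqP //]; rewrite -PE setU1_in.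
Qed.

Lemma new_upper_through p : p \in New ->
  [set P in new_side false | p \in P] = [set P in [set star p] | nn \notin P].
Proof.
move=> pN; apply/setP => P.
rewrite [in LHS]inE in_new_side eqbF_neg andbAC mem_new_ksys_through // [in RHS]inE in_set1.
case: (eqVneq P (star p)) => [->|_]; first by rewrite star_open.
by case: (eqVneq P (nn |: star p)) => [->|_]; rewrite ?setU11 ?andbF.
Qed.

Lemma new_lower_through p : p \in New ->
  [set P in new_side true | p \in P] = [set P in [set nn |: star p] | P \in tau].
Proof.
move=> pN; apply/setP => P.
rewrite [in LHS]inE in_new_side eqb_id andbAC mem_new_ksys_through // [in RHS]inE in_set1.
case: (eqVneq P (nn |: star p)) => [->|Pn]; first by rewrite setU11 orbT !andbT.
case: (eqVneq P (star p)) => [PE|]; rewrite ?andbF //; move: Pn; rewrite -PE.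
by case: (boolP (nn \in P)) => [/setU1_in -> | _]; rewrite ?eqxx ?andbF.
Qed.

Lemma card_new_upper_through p : p \in New ->
  #|[set P in new_side false | p \in P]| = (nn \notin star p).
Proof. by move=> pN; rewrite new_upper_through // card_set1_sep. Qed.

Lemma card_new_lower_through p : p \in New ->
  #|[set P in new_side true | p \in P]| = (nn |: star p \in tau).
Proof. by move=> pN; rewrite new_lower_through // card_set1_sep. Qed.

Lemma new_ksys_parts P : P \in NS ->
  P :&: New != set0 /\ P :&: Old :|: P :&: New = P :\ nn.
Proof.
move=> NSP; split.
  by have [p pN pP] := new_ksys_new_pt NSP; apply/set0Pn; exists p; rewrite inE pP.
have nnO : nn \notin Old by apply/negP => /old_ptsP[/eqP].
have nnN : nn \notin New by apply/negP => /new_ptsP[/eqP].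
apply/setP => x; rewrite in_setD1 in_setU !in_setI -andb_orr; case: (eqVneq x nn) => [->|x_nn] /=.
  by rewrite (negbTE nnO) (negbTE nnN) andbF.
case: (boolP (x \in P)) => //= xP; exact: msystem_old_or_new (new_ksys_msystem NSP) xP x_nn.
Qed.

Lemma new_side_parts b m : #|new_side b| = m ->
  exists A R : 'I_m -> {set T},
  [/\ forall j, A j \subset Old /\ R j \subset New /\ R j != set0,
      injective (fun j => A j :|: R j),
      new_side b = [set (if b then nn |: (A j :|: R j) else A j :|: R j) | j in 'I_m] &
      forall p, p \in New -> #|[set j | p \in R j]| = #|[set P in new_side b | p \in P]|].
Proof.
move=> /enum_setP[f f_inj fE].
have f_side j : f j \in new_side b by rewrite -fE imset_f.
have f_parts j : f j :&: New != set0 /\ f j :&: Old :|: f j :&: New = f j :\ nn.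
  by apply: new_ksys_parts; move: (f_side j); rewrite in_new_side => /andP[].
have glue j : (if b then nn |: (f j :\ nn) else f j :\ nn) = f j.
  move: (f_side j); rewrite in_new_side => /andP[_ /eqP <-].
  by case: ifP => [/setD1K | /negbT/setD1_notin].
exists (fun j => f j :&: Old), (fun j => f j :&: New); split.
- by move=> j; rewrite !subsetIr (f_parts j).1.
- move=> j1 j2 /=; rewrite (f_parts j1).2 (f_parts j2).2 => E.
  by apply: f_inj; rewrite -[f j1]glue -[f j2]glue E.
- by rewrite -fE; apply: eq_imset => j; rewrite (f_parts j).2 glue.
move=> p pN; rewrite -fE -(card_imset [set j | p \in f j :&: New] f_inj).
apply: eq_card => P; rewrite inE; apply/imsetP/andP => [[j] | [/imsetP[j _ ->]]].
  by rewrite inE in_setI pN andbT => pf ->; rewrite imset_f.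
by exists j; rewrite // inE in_setI pN andbT.
Qed.

Lemma Nq_not_new i : i != nn -> i \notin Old -> i \notin New ->
  Nq nn tau k i = #|new_side false|.
Proof.
move=> i_nn iO iN; rewrite NqE //; apply: eq_card => P; rewrite inE in_new_side.
case: (boolP (P \in NS)) => //= NSP; rewrite eq_sym.
suff /negbTE -> : i \notin P by [].
apply: contraNN iO => iP.
by have := msystem_old_or_new (new_ksys_msystem NSP) iP i_nn; rewrite (negbTE iN) orbF.
Qed.

Lemma Nq_new p : p \in New ->
  Nq nn tau k p + (nn \notin star p) = #|new_side false| + (nn |: star p \in tau).
Proof.
move=> pN; have [p_nn _] := new_ptsP _ pN.
rewrite NqE // -card_new_upper_through // -card_new_lower_through //.
set C := [set P in NS | _]; set SU := [set P in new_side false | _].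
set SL := [set P in new_side true | _].
have CSU : C :&: SU = set0.
  by apply/setP => P; rewrite !inE; case: (p \in P); case: (nn \in P); rewrite ?andbF.
have SLU : SL :&: new_side false = set0.
  by apply/setP => P; rewrite !inE; case: (nn \in P); rewrite ?andbF.
have CSL : C :|: SU = SL :|: new_side false.
  apply/setP => P; rewrite !inE.
  by case: (p \in P); case: (nn \in P); rewrite /= ?andbF ?andbT ?orbF.
have := cardsUI C SU; have := cardsUI SL (new_side false).
by rewrite CSU SLU CSL cards0 !addn0 addnC => -> ->.
Qed.

Lemma star_new_ksys p : p \in New -> star p \in NS.
Proof.
by move=> pN; have := mem_new_ksys_through (star p) pN; rewrite star_open eqxx => /andP[].
Qed.

Lemma setU1_star_new_ksys p : p \in New -> nn |: star p \in tau -> nn |: star p \in NS.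
Proof.
move=> pN tauS; have := mem_new_ksys_through (nn |: star p) pN.
by rewrite tauS eqxx orbT => /andP[].
Qed.

Lemma nonpaired_star p : p \in New ->
  nonpaired nn tau k (star p) = (nn \in star p) || (nn |: star p \notin tau).
Proof.
move=> pN; have [p_nn pk] := new_ptsP _ pN.
rewrite /nonpaired /paired /msystem star_open pk eqxx /=.
by case: ifP => nS; rewrite ?open_star_setD1 ?nS.
Qed.

Lemma new_point_types s :
  Iset nn tau k != set0 -> {in Iset nn tau k, forall i, Nq nn tau k i = s} ->
  [\/ [/\ s.+1 = #|new_side false|, Iset nn tau k = New &
         {in New, forall p, (nn \notin star p) && (nn |: star p \notin tau)}],
      s = #|new_side false| /\
        {in New, forall p, (nn \notin star p) && (nn |: star p \in tau)} |
      {in New, forall p, nn \in star p}].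
Proof.
move=> /set0Pn[i0 i0I] NqI.
have New_I p : p \in New -> p \in Iset nn tau k.
  by move=> pN; rewrite inE (new_pts_notin_old pN) andbT; case/new_ptsP: pN.
have new_count p : p \in New ->
    s + (nn \notin star p) = #|new_side false| + (nn |: star p \in tau).
  by move=> pN; rewrite -(NqI p (New_I p pN)) Nq_new.
have other_count i : i \in Iset nn tau k -> i \notin New -> s = #|new_side false|.
  move=> iI iN; rewrite -(NqI i iI); move: iI; rewrite inE => /andP[i_nn iO].
  exact: Nq_not_new.
have star_nn p : nn \in star p -> nn |: star p \in tau by move/setU1_in ->; exact: star_open.
case: (ltngtP s #|new_side false|) => [lt_s | gt_s | eq_s].
- have IN : Iset nn tau k = New.
    apply/setP => i; apply/idP/idP => [iI | /New_I //].
    by apply: contraLR lt_s => /(other_count i iI) ->; rewrite ltnn.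
  have i0N : i0 \in New by rewrite -IN.
  by constructor 1; split => // [|p /new_count]; move: (new_count i0 i0N); lia.
- constructor 3 => p pN; have := new_count p pN; have := star_nn p; lia.
- constructor 2; split => // p pN; have := new_count p pN; have := star_nn p; lia.
Qed.

Lemma upper_configuration s : s.+1 = #|new_side false| ->
  {in New, forall p, (nn \notin star p) && (nn |: star p \notin tau)} ->
  exists (A R : 'I_s.+1 -> {set T}),
    [/\ (forall j, A j \subset Old /\ R j \subset New /\ R j != set0),
        injective (fun j => A j :|: R j),
        NS = [set A j :|: R j | j in 'I_s.+1],
        (forall j, upper nn (A j :|: R j) /\ nonpaired nn tau k (A j :|: R j)) &
        forall p, p \in New -> #|[set j | p \in R j]| = 1].
Proof.
move=> sE typeA.
have NSE : NS = new_side false.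
  rewrite new_ksys_sides; suff -> : new_side true = set0 by rewrite setU0.
  apply/setP => P; rewrite in_set0; apply/negP => PL; have [p pN PE] := new_lower_star PL.
  by have /andP[_] := typeA p pN; rewrite -PE (new_side_open PL).
have [A [R [parts inj sideE once]]] := new_side_parts (esym sE).
have AR_side j : A j :|: R j \in new_side false by rewrite sideE; apply: imset_f.
exists A, R; split => //; first by rewrite NSE.
- move=> j; have [p pN PE] := new_upper_star (AR_side j); split.
    by move: (AR_side j); rewrite in_new_side eqbF_neg => /andP[].
  by have /andP[_ ntau] := typeA p pN; rewrite PE nonpaired_star // ntau orbT.
- by move=> p pN; rewrite once // card_new_upper_through //; case/andP: (typeA p pN) => ->.
Qed.

Lemma paired_configuration s : s = #|new_side false| ->
  {in New, forall p, (nn \notin star p) && (nn |: star p \in tau)} ->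
  exists (A R : 'I_s -> {set T}),
    [/\ (forall j, A j \subset Old /\ R j \subset New /\ R j != set0),
        injective (fun j => A j :|: R j) &
        NS = [set A j :|: R j | j in 'I_s] :|: [set nn |: (A j :|: R j) | j in 'I_s]].
Proof.
move=> sE typeB.
have [A [R [parts inj sideE _]]] := new_side_parts (esym sE).
exists A, R; split => //; rewrite new_ksys_sides -sideE; congr (_ :|: _).
have -> : [set nn |: (A j :|: R j) | j in 'I_s] = [set nn |: P | P in new_side false].
  by rewrite sideE -imset_comp.
apply/setP => P; apply/idP/imsetP => [PL | [Q QU ->]].
  have [p pN ->] := new_lower_star PL; exists (star p) => //.
  by have /andP[nS _] := typeB p pN; rewrite in_new_side star_new_ksys // eqbF_neg.
have [p pN ->] := new_upper_star QU; have /andP[_ tauS] := typeB p pN.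
by rewrite in_new_side setU1_star_new_ksys // setU11.
Qed.

Lemma lower_configuration : {in New, forall p, nn \in star p} ->
  exists (x : nat) (A R : 'I_x -> {set T}),
    [/\ (forall j, A j \subset Old /\ R j \subset New /\ R j != set0),
        injective (fun j => A j :|: R j),
        NS = [set nn |: (A j :|: R j) | j in 'I_x],
        (forall j, nonpaired nn tau k (nn |: (A j :|: R j))) &
        (forall p, p \in New -> #|[set j | p \in R j]| = 1)].
Proof.
move=> typeC.
have NSE : NS = new_side true.
  rewrite new_ksys_sides; suff -> : new_side false = set0 by rewrite set0U.
  apply/setP => P; rewrite in_set0; apply/negP => PU; have [p pN PE] := new_upper_star PU.
  by move: PU; rewrite in_new_side PE typeC //= andbF.
have [A [R [parts inj sideE once]]] := new_side_parts (erefl #|new_side true|).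
exists #|new_side true|, A, R; split => //; first by rewrite NSE.
- move=> j; have /new_lower_star[p pN ->] : nn |: (A j :|: R j) \in new_side true.
    by rewrite sideE; apply: imset_f.
  by rewrite setU1_in ?typeC // nonpaired_star // typeC.
- by move=> p pN; rewrite once // card_new_lower_through // setU1_in ?typeC ?star_open.
Qed.

End Stage.

Theorem theorem3 (n : nat) (hn : 2 <= n) (tau : {set {set 'I_n}}) (k s : nat) :
  let nn := lastpt hn in
  is_topology tau -> 1 <= k ->
  Iset nn tau k != set0 ->
  (forall i, i \in Iset nn tau k -> Nq nn tau k i = s) ->
  let NS := new_ksystems nn tau k in
  let Old := old_pts nn tau k in
  let New := new_pts nn tau k in
  let mu1 := #|Iset nn tau k| in
  (* (1a) *)
  (exists (A R : 'I_s.+1 -> {set 'I_n}),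
      [/\ (forall j, A j \subset Old /\ R j \subset New /\ R j != set0),
          injective (fun j => A j :|: R j),
          NS = [set A j :|: R j | j in 'I_s.+1],
          (forall j, upper nn (A j :|: R j) /\ nonpaired nn tau k (A j :|: R j)) &
          (forall p, p \in New -> #|[set j | p \in R j]| = 1) /\
          mu1 = #|New|])
  \/
  (* (1b) *)
  (exists (A R : 'I_s -> {set 'I_n}),
      [/\ (forall j, A j \subset Old /\ R j \subset New /\ R j != set0),
          injective (fun j => A j :|: R j) &
          NS = [set A j :|: R j | j in 'I_s] :|:
               [set nn |: (A j :|: R j) | j in 'I_s]])
  \/
  (* (1c) *)
  (NS = set0 /\ s = 0)
  \/
  (* (1d) *)
  (exists (x : nat) (A R : 'I_x -> {set 'I_n}),
      [/\ (forall j, A j \subset Old /\ R j \subset New /\ R j != set0),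
          injective (fun j => A j :|: R j),
          NS = [set nn |: (A j :|: R j) | j in 'I_x],
          (forall j, nonpaired nn tau k (nn |: (A j :|: R j))) &
          (forall p, p \in New -> #|[set j | p \in R j]| = 1)]).
Proof.
move=> nn top _ I0 NqI NS Old New mu1.
have [[sE IE typeA] | [sE typeB] | typeC] := new_point_types top I0 NqI.
- have [A [R [parts inj NSE upA once]]] := upper_configuration top sE typeA.
  by left; exists A, R; split => //; split; rewrite // /mu1 IE.
- by right; left; apply: paired_configuration.
- by right; right; right; apply: lower_configuration.
Qed.
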